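(* Let $N\ge 1$, $\kappa_t,\kappa_r\ge 0$ with $\kappa_t^2+\kappa_r^2>0$, $\gamma>0$, and let $A=\sum_{i=1}^N |h_i|\,|g_i|$, where all $|h_i|,|g_i|$ are mutually independent, each $|h_i|$ has PDF $f_{h}(x)=\sum_{m=1}^{M}2a^{(1)}_m x^{2b^{(1)}_m-1}e^{-c_1x^2}$ and each $|g_i|$ has PDF $f_{g}(x)=\sum_{k=1}^{K}2a^{(2)}_k x^{2b^{(2)}_k-1}e^{-c_2x^2}$ ($x\ge0$). Define the SDNR $\gamma_u=\dfrac{A^2}{(\kappa_t^2+\kappa_r^2)A^2+\frac1\gamma}$ and, for a transmission spectral efficiency $r_{\mathrm{th}}>0$, the throughput $\mathcal{D}^{\text{wo}}(r_{\mathrm{th}})=r_{\mathrm{th}}\Pr\big(\log_2(1+\gamma_u)>r_{\mathrm{th}}\big)$. Let the CDF of $A$ be given by the moment-matched generalized-$K$ model $$F_A(x)=\frac{1}{\Gamma(k_A)\Gamma(m_A)}\,\mathrm{G}_{1,3}^{2,1}\!\left(\Xi^2x^2\left|\begin{array}{c}1\\ k_A,m_A,0\end{array}\right.\right),$$ with parameters defined as follows. For $l\ge0$, $$\mu_{\chi}(l)=\sum_{m=1}^{M}\sum_{k=1}^{K}a^{(1)}_m a^{(2)}_k\left(\frac{c_1}{c_2}\right)^{-\frac{b^{(1)}_m-b^{(2)}_k}{2}}(c_1c_2)^{-\frac{b^{(1)}_m+b^{(2)}_k+l}{2}}\Gamma\!\Big(b^{(1)}_m+\frac l2\Big)\Gamma\!\Big(b^{(2)}_k+\frac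 l2\Big),$$ $$\mu_A(l)=\sum_{l_1=0}^{l}\sum_{l_2=0}^{l_1}\cdots\sum_{l_{N-1}=0}^{l_{N-2}}\binom{l}{l_1}\binom{l_1}{l_2}\cdots\binom{l_{N-2}}{l_{N-1}}\mu_{\chi}(l-l_1)\mu_{\chi}(l_1-l_2)\cdots\mu_{\chi}(l_{N-1}),$$ $a_A=\mu_A(6)\mu_A(2)+\mu_A(2)^2\mu_A(4)-2\mu_A(4)^2$, $b_A=\mu_A(6)\mu_A(2)-4\mu_A(4)^2+3\mu_A(2)^2\mu_A(4)$, $c_A=2\mu_A(2)^2\mu_A(4)$, $\Omega_A=\mu_A(2)$, $k_A=-\frac{b_A}{2a_A}+\frac{\sqrt{b_A^2-4a_Ac_A}}{2a_A}$, $m_A=-\frac{b_A}{2a_A}-\frac{\sqrt{b_A^2-4a_Ac_A}}{2a_A}$, $\Xi=\sqrt{k_Am_A/\Omega_A}$. Then $$\mathcal{D}^{\text{wo}}(r_{\mathrm{th}})=\begin{cases} r_{\mathrm{th}}\left(1-\dfrac{1}{\Gamma(k_A)\Gamma(m_A)}\mathrm{G}_{1,3}^{2,1}\!\left(\dfrac{\Xi^2\,\frac{2^{r_{\mathrm{th}}}-1}{\gamma}}{1-(\kappa_t^2+\kappa_r^2)(2^{r_{\mathrm{th}}}-1)}\left|\begin{array}{c}1\\ k_A,m_A,0\end{array}\right.\right)\right), & r_{\mathrm{th}}<\log_2\!\left(\frac{1}{\kappa_t^2+\kappa_r^2}+1\right),\\[2mm] 0, & r_{\mathrm{th}}\ge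\log_2\!\left(\frac{1}{\kappa_t^2+\kappa_r^2}+1\right).\end{cases}$$
   Context: Setting: an RIS-assisted UAV link without UAV disorientation or beam misalignment. A source S reaches a UAV only via a reconfigurable intelligent surface with $N$ elements using optimal phase shifts, so the end-to-end amplitude is $A=\sum_{i=1}^N|h_i||g_i|$, where $|h_i|$ (S-to-element) and $|g_i|$ (element-to-UAV) are independent mixture-Gamma random variables with the PDFs given in the claim (parameters $a^{(j)},b^{(j)},c_j>0$). Transceiver hardware imperfections are modeled by error vector magnitudes $\kappa_t$ (transmitter) and $\kappa_r$ (receiver), and $\gamma=h_l^2P_s/\sigma_w^2$ is the transmit SNR scaled by the deterministic spreading loss. $\mathrm{G}_{p,q}^{m,n}$ is the Meijer G-function and $\Gamma$ the Gamma function. The CDF of $A$ is modeled (as in the paper) by the generalized-$K$ distribution whose parameters $k_A,m_A,\Xi$ are obtained by matching the moments $\mu_A(2),\mu_A(4),\mu_A(6)$ of $A$; $\mu_\chi(l)$ is the $l$-th moment of $|h_i||g_i|$ and $\mu_A(l)$ the $l$-th moment of $A$. *)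

From HB Require Import structures.
From mathcomp Require Import all_boot all_order all_algebra.
From mathcomp Require Import all_classical all_reals all_analysis.
Set Implicit Arguments. Unset Strict Implicit. Unset Printing Implicit Defensive.
Import Order.TTheory GRing.Theory Num.Theory.
Import numFieldNormedType.Exports.
Local Open Scope classical_set_scope.
Local Open Scope ring_scope.

Definition Gamma {R : realType} (x : R) : R :=
  Rintegral lebesgue_measure `]0%R, +oo[%classic
    (fun t : R => powR t (x - 1) * expR (- t)).

(* Meijer G-function G^{2,0}_{0,2}(t | b1, b2), via its standard integral
   representation t^{b1} int_0^oo u^{b2-b1-1} exp(-u - t/u) du
   (= 2 t^{(b1+b2)/2} K_{b1-b2}(2 sqrt t)), t > 0. *)
Definition MeijerG20_02 {R : realType} (b1 b2 t : R) : R :=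
  powR t b1 * Rintegral lebesgue_measure `]0%R, +oo[%classic
    (fun u : R => powR u (b2 - b1 - 1) * expR (- u - t / u)).

(* Meijer G-function G^{2,1}_{1,3}(z | 1 ; b1, b2, 0), z >= 0, via the
   standard identity G^{2,1}_{1,3}(z|1;b1,b2,0) = int_0^z t^{-1} G^{2,0}_{0,2}(t|b1,b2) dt
   (valid for b1, b2 > 0). *)
Definition MeijerG21_13 {R : realType} (b1 b2 z : R) : R :=
  Rintegral lebesgue_measure `]0%R, z]%classic
    (fun t : R => t^-1 * MeijerG20_02 b1 b2 t).

Definition log2 {R : realType} (x : R) : R := ln x / ln 2.

(* mu_chi(l): l-th moment of |h_i||g_i| (formula of the paper). *)
Definition mu_chi {R : realType} (M K : nat) (a1 b1 : 'I_M -> R)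
  (a2 b2 : 'I_K -> R) (c1 c2 : R) (l : nat) : R :=
  \sum_(m < M) \sum_(k < K)
    a1 m * a2 k * powR (c1 / c2) (- ((b1 m - b2 k) / 2))
    * powR (c1 * c2) (- ((b1 m + b2 k + l%:R) / 2))
    * Gamma (b1 m + l%:R / 2) * Gamma (b2 k + l%:R / 2).

(* The nested multinomial sum of the paper with n summation levels
   (n = N - 1):  mu_nested mu 0 l = mu l,
   mu_nested mu n.+1 l = sum_{l1=0}^{l} C(l,l1) mu(l-l1) mu_nested mu n l1. *)
Fixpoint mu_nested {R : realType} (mu : nat -> R) (n l : nat) : R :=
  match n with
  | 0 => mu l
  | n'.+1 => \sum_(l1 < l.+1) ('C(l, l1))%:R * mu (l - l1)%N * mu_nested mu n' l1
  end.

Definition mutually_independent {d : measure_display} {T : measurableType d}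
  {R : realType} (P : probability T R) (I : finType) (X : I -> T -> R) : Prop :=
  forall (J : {set I}) (B : I -> set R),
    (forall i, measurable (B i)) ->
    P (\bigcap_(i in [set j | j \in J]) (X i @^-1` B i)) =
    (\prod_(i in J) P (X i @^-1` B i))%E.

Section GenK.
Context {R : realType} (mu2 mu4 mu6 : R).
Definition aA : R := mu6 * mu2 + mu2 ^+ 2 * mu4 - 2 * mu4 ^+ 2.
Definition bA : R := mu6 * mu2 - 4 * mu4 ^+ 2 + 3 * mu2 ^+ 2 * mu4.
Definition cA : R := 2 * mu2 ^+ 2 * mu4.
Definition OmegaA : R := mu2.
Definition kA : R := - bA / (2 * aA) + Num.sqrt (bA ^+ 2 - 4 * aA * cA) / (2 * aA).
Definition mA : R := - bA / (2 * aA) - Num.sqrt (bA ^+ 2 - 4 * aA * cA) / (2 * aA).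
Definition XiA : R := Num.sqrt (kA * mA / OmegaA).
End GenK.

Definition sdnr {R : realType} (kt kr gam A : R) : R :=
  A ^+ 2 / ((kt ^+ 2 + kr ^+ 2) * A ^+ 2 + gam^-1).

From HB Require Import structures.
From mathcomp Require Import all_boot all_order all_algebra.
From mathcomp Require Import all_classical all_reals all_analysis.
From mathcomp Require Import ring.
Import Order.TTheory GRing.Theory Num.Theory.
Import numFieldNormedType.Exports.
Local Open Scope classical_set_scope.
Local Open Scope ring_scope.

(* With t = 2^r_th - 1 and kappa^2 = kt^2 + kr^2, the event
   log2 (1 + SDNR) > r_th is A^2 (1 - kappa^2 t) > t / gamma.  When
   kappa^2 t < 1 this is the event A > sqrt (t / gamma / (1 - kappa^2 t)),
   whose probability is one minus the CDF of A at that point; otherwise the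
   SDNR never exceeds the threshold (it is bounded by 1 / kappa^2) and the
   event is empty. *)

Section log2.
Variable R : realType.

Lemma powR_gt1 (a r : R) : 1 < a -> 0 < r -> 1 < a `^ r.
Proof.
move=> a1 r0; have a0 : 0 < a by apply: lt_trans a1.
by rewrite -ltr_ln ?posrE ?powR_gt0 // ln1 ln_powR mulr_gt0 // ln_gt0.
Qed.

Lemma lt_log2 (r z : R) : 0 < z -> (r < log2 z) = (2 `^ r < z).
Proof.
move=> z0; have ln2_gt0 : 0 < ln (2 : R) by rewrite ln_gt0 // ltr1n.
by rewrite /log2 ltr_pdivlMr // -ln_powR ltr_ln // posrE powR_gt0.
Qed.

Lemma lt_log2_invD1 (k r : R) : 0 < k ->
  (r < log2 (k^-1 + 1)) = (k * (2 `^ r - 1) < 1).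
Proof.
move=> k0; rewrite lt_log2 ?addr_gt0 ?invr_gt0 // -ltrBlDr.
by rewrite -(ltr_pM2l k0) mulfV ?gt_eqF.
Qed.

End log2.

Lemma sqrtr_pdiv_ltE (R : rcfType) (c d a : R) : 0 <= c -> 0 < d -> 0 <= a ->
  (c < a ^+ 2 * d) = (Num.sqrt (c / d) < a).
Proof.
move=> c0 d0 a0; rewrite -ltr_pdivrMr //.
by rewrite -[RHS]ltr_sqr ?nnegrE ?sqrtr_ge0 // sqr_sqrtr // divr_ge0 // ltW.
Qed.

Lemma sdnr_rate_gtE (R : realType) (kt kr gam r a : R) : 0 < gam ->
  (r < log2 (1 + sdnr kt kr gam a)) =
  ((2 `^ r - 1) / gam < a ^+ 2 * (1 - (kt ^+ 2 + kr ^+ 2) * (2 `^ r - 1))).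
Proof.
move=> gam0; set k := kt ^+ 2 + kr ^+ 2; set t := 2 `^ r - 1.
have den_gt0 : 0 < k * a ^+ 2 + gam^-1.
  by rewrite ltr_wpDl ?invr_gt0 // mulr_ge0 ?addr_ge0 ?sqr_ge0.
have sdnr_ge0 : 0 <= sdnr kt kr gam a by rewrite divr_ge0 ?sqr_ge0 ?ltW.
rewrite lt_log2; last by rewrite ltr_pwDl.
rewrite -ltrBlDl -/t /sdnr -/k ltr_pdivlMr //.
by rewrite -subr_gt0 -[RHS]subr_gt0; congr (0 < _); ring.
Qed.

Lemma probability_gtE (d : measure_display) (T : measurableType d)
    (R : realType) (P : probability T R) (X : T -> R) (x : R) :
  measurable_fun setT X ->
  P [set w | x < X w] = (1 - P [set w | (X w <= x)%R])%E.
Proof.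
move=> mX; rewrite -probability_setC; last first.
  rewrite (_ : [set w | X w <= x] = setT `&` X @^-1` `]-oo, x]); first exact: mX.
  by apply/seteqP; split => w /=; rewrite in_itv /=; [move=> ->|case=> _ ->].
by congr (P _); apply/seteqP; split => w /=; rewrite ltNge => /negP.
Qed.

Theorem proposition1 (R : realType) (d : measure_display) (T : measurableType d)
  (P : probability T R) (N M K : nat)
  (a1 b1 : 'I_M -> R) (c1 : R) (a2 b2 : 'I_K -> R) (c2 : R)
  (h g : 'I_N -> {RV P >-> R}) (kt kr gam rth : R) :
  (0 < N)%N ->
  (forall m, 0 < a1 m) -> (forall m, 0 < b1 m) -> 0 < c1 ->
  (forall k, 0 < a2 k) -> (forall k, 0 < b2 k) -> 0 < c2 ->
  (* |h_i| and |g_i| are nonnegative, mutually independent, with the given PDFs *)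
  (forall i w, 0 <= h i w) -> (forall i w, 0 <= g i w) ->
  mutually_independent P
    (fun j : 'I_N + 'I_N => match j with inl i => (h i : T -> R)
                                       | inr i => (g i : T -> R) end) ->
  (forall i x, 0 <= x ->
     P [set w | h i w <= x] =
     (Rintegral lebesgue_measure `[0%R, x]
        (fun y => \sum_(m < M) 2 * a1 m * powR y (2 * b1 m - 1) * expR (- (c1 * y ^+ 2))))%:E) ->
  (forall i x, 0 <= x ->
     P [set w | g i w <= x] =
     (Rintegral lebesgue_measure `[0%R, x]
        (fun y => \sum_(k < K) 2 * a2 k * powR y (2 * b2 k - 1) * expR (- (c2 * y ^+ 2))))%:E) ->
  0 <= kt -> 0 <= kr -> 0 < kt ^+ 2 + kr ^+ 2 -> 0 < gam -> 0 < rth ->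
  let A : T -> R := fun w => \sum_(i < N) h i w * g i w in
  let muA : nat -> R := mu_nested (mu_chi a1 b1 a2 b2 c1 c2) N.-1 in
  let k_A := kA (muA 2%N) (muA 4%N) (muA 6%N) in
  let m_A := mA (muA 2%N) (muA 4%N) (muA 6%N) in
  let Xi := XiA (muA 2%N) (muA 4%N) (muA 6%N) in
  let kap2 := kt ^+ 2 + kr ^+ 2 in
  (* moment-matched generalized-K model for the CDF of A *)
  (forall x, 0 <= x ->
     P [set w | A w <= x] =
     ((Gamma k_A * Gamma m_A)^-1 * MeijerG21_13 k_A m_A (Xi ^+ 2 * x ^+ 2))%:E) ->
  let Dwo := (rth%:E * P [set w | (rth < log2 (1 + sdnr kt kr gam (A w)))%R])%E in
  (rth < log2 (kap2^-1 + 1) ->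
     Dwo = (rth * (1 - (Gamma k_A * Gamma m_A)^-1 *
              MeijerG21_13 k_A m_A
                (Xi ^+ 2 * ((2 `^ rth - 1) / gam) / (1 - kap2 * (2 `^ rth - 1)))))%:E) /\
  (log2 (kap2^-1 + 1) <= rth -> Dwo = 0%E).
Proof.
move=> _ _ _ _ _ _ _ h_ge0 g_ge0 _ _ _ _ _ kap2_gt0 gam_gt0 rth_gt0.
move=> A muA k_A m_A Xi kap2 cdfA Dwo.
have A_ge0 w : 0 <= A w by apply: sumr_ge0 => i _; apply: mulr_ge0.
have A_mfun : measurable_fun setT A.
  by apply: measurable_sum => i; apply: measurable_realfun.measurable_funM.
set t := 2 `^ rth - 1.
have t_gt0 : 0 < t by rewrite subr_gt0 powR_gt1 // ltr1n.
have event w : (rth < log2 (1 + sdnr kt kr gam (A w))) =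
               (t / gam < A w ^+ 2 * (1 - kap2 * t)) by exact: sdnr_rate_gtE.
split; rewrite ?leNgt lt_log2_invD1 // -/t => kap2t.
- have margin_gt0 : 0 < 1 - kap2 * t by rewrite subr_gt0.
  have tgam_ge0 : 0 <= t / gam by rewrite divr_ge0 ?ltW.
  set c := t / gam / (1 - kap2 * t).
  have c_ge0 : 0 <= c by rewrite /c divr_ge0 // ltW.
  rewrite /Dwo (_ : [set w | _] = [set w | Num.sqrt c < A w]); last first.
    by apply/funext => w /=; rewrite event sqrtr_pdiv_ltE.
  by rewrite probability_gtE // cdfA ?sqrtr_ge0 // (sqr_sqrtr c_ge0) -EFinB -EFinM !mulrA.
- rewrite /Dwo (_ : [set w | _] = set0) ?measure0 ?mule0 //.
  apply/funext => w /=; apply/propext; split => //.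
  rewrite event ltNge => /negP; apply; apply: (@le_trans _ _ 0).
    by rewrite mulr_ge0_le0 ?sqr_ge0 // subr_le0 leNgt kap2t.
  by rewrite divr_ge0 ?ltW.
Qed.
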